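(* Let $E:\mathbb R^N\to\mathbb R$ be a function which is analytic at a local minimum $\mathbf p$, and let $j,k\ge1$ be integers. Suppose there exists a $(j,2k)$ $E$-flex $\mathbf p(t)$ at $\mathbf p$. Then $E$ grows sometimes-$s$-slowly at $\mathbf p$, where $s=\frac{2k+2}{j}$.
   Context: A trajectory at $\mathbf p$ is an analytic non-constant map $t\mapsto\mathbf p(t)\in\mathbb R^N$, defined for $t\in[0,\varepsilon]$ for some $\varepsilon>0$, with $\mathbf p(0)=\mathbf p$. A $C^k$ function $\varphi(t)$ is $k$-vanishing if $\varphi^{(i)}(0)=0$ for $1\le i\le k$, and $k$-active if $(k-1)$-vanishing but not $k$-vanishing. A $(j,k)$ $E$-flex at $\mathbf p$ is a $j$-active trajectory $\mathbf p(t)$ at $\mathbf p$ such that $E(\mathbf p(t))$ is $k$-vanishing. $E$ grows sometimes-$s$-slowly at $\mathbf p$ if there exist a trajectory $\mathbf q(t)$ at $\mathbf p$ and constants $c_2,\delta>0$ such that $E(\mathbf q(t))-E(\mathbf p)\le c_2|\mathbf q(t)-\mathbf p|^s$ for $t\in[0,\delta]$. *)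

From HB Require Import structures.
From mathcomp Require Import all_boot all_order all_algebra.
From mathcomp Require Import all_classical all_reals all_analysis.
Set Implicit Arguments. Unset Strict Implicit. Unset Printing Implicit Defensive.
Import Order.TTheory GRing.Theory Num.Theory.
Import numFieldNormedType.Exports.
Local Open Scope classical_set_scope.
Local Open Scope ring_scope.

Definition enorm (R : realType) (N : nat) (x : 'rV[R]_N) : R :=
  Num.sqrt (\sum_(i < N) x ord0 i ^+ 2).

Definition monom (R : realType) (N : nat) (alpha : 'I_N -> nat) (h : 'rV[R]_N) : R :=
  \prod_(i < N) h ord0 i ^+ alpha i.

(* Homogeneous part of total degree n of the power series with coefficients c,
   evaluated at h (finite sum over multi-indices of total degree n). *)
Definition hom_part (R : realType) (N : nat) (c : ('I_N -> nat) -> R)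
    (h : 'rV[R]_N) (n : nat) : R :=
  \sum_(a : {ffun 'I_N -> 'I_n.+1} | (\sum_(i < N) (a i : nat))%N == n)
     c (fun i => (a i : nat)) * monom (fun i => (a i : nat)) h.

Definition abs_hom_part (R : realType) (N : nat) (c : ('I_N -> nat) -> R)
    (h : 'rV[R]_N) (n : nat) : R :=
  \sum_(a : {ffun 'I_N -> 'I_n.+1} | (\sum_(i < N) (a i : nat))%N == n)
     `|c (fun i => (a i : nat))| * `|monom (fun i => (a i : nat)) h|.

(* E : R^N -> R is (real) analytic at p: on a neighbourhood of p it equals an
   absolutely convergent power series centred at p. *)
Definition analytic_at (R : realType) (N : nat) (E : 'rV[R]_N -> R) (p : 'rV[R]_N) :=
  exists (r : R) (c : ('I_N -> nat) -> R), 0 < r /\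
    forall h : 'rV[R]_N, enorm h < r ->
      (exists l : R, series (abs_hom_part c h) @ \oo --> l) /\
      series (hom_part c h) @ \oo --> E (p + h).

Definition analytic1_at (R : realType) (f : R -> R) (t0 : R) :=
  exists (r : R) (a : nat -> R), 0 < r /\
    forall h : R, `|h| < r ->
      (exists l : R, series (fun n => `|a n| * `|h| ^+ n) @ \oo --> l) /\
      series (fun n => a n * h ^+ n) @ \oo --> f (t0 + h).

(* A trajectory at p: an analytic non-constant map t |-> q t defined for
   t in [0, eps], with q 0 = p.  Represented by a total function which is
   analytic (coordinatewise) on an open interval containing [0, eps]. *)
Definition trajectory (R : realType) (N : nat) (q : R -> 'rV[R]_N) (p : 'rV[R]_N) :=
  q 0 = p /\
  exists eps : R, 0 < eps /\
    (exists d : R, 0 < d /\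
       forall t : R, - d < t < eps + d ->
         forall i : 'I_N, analytic1_at (fun s => q s ord0 i) t) /\
    (exists t : R, 0 <= t <= eps /\ q t != p).

Definition vanishing (R : realType) (V : normedModType R) (k : nat) (phi : R -> V) :=
  forall i : nat, (1 <= i <= k)%N -> derive1n i phi 0 = 0.

Definition active (R : realType) (V : normedModType R) (k : nat) (phi : R -> V) :=
  vanishing k.-1 phi /\ ~ vanishing k phi.

Definition flex (R : realType) (N : nat) (E : 'rV[R]_N -> R) (p : 'rV[R]_N)
    (j k : nat) (q : R -> 'rV[R]_N) :=
  trajectory q p /\ active j q /\ vanishing k (E \o q).

Definition sometimes_slowly (R : realType) (N : nat) (E : 'rV[R]_N -> R)
    (p : 'rV[R]_N) (s : R) :=
  exists q : R -> 'rV[R]_N, trajectory q p /\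
    exists c2 d : R, 0 < c2 /\ 0 < d /\
      forall t : R, 0 <= t <= d -> E (q t) - E p <= c2 * powR (enorm (q t - p)) s.

Definition local_min (R : realType) (N : nat) (E : 'rV[R]_N -> R) (p : 'rV[R]_N) :=
  exists d : R, 0 < d /\ forall x : 'rV[R]_N, enorm (x - p) < d -> E p <= E x.

(* Each coordinate of q t - p is a power series
   in t, and j-activity says that the lowest nonzero coefficients sit at order
   j, so |q t - p| >= c t^j for small t >= 0.  Shrinking the radius makes the
   majorants of these series as small as we like, so they can be substituted
   into the power series of E at p: by absolute convergence the double series
   rearranges into a power series E (q t) = \sum_n beta_n t^n.  The
   2k-vanishing of E \o q kills beta_1, ..., beta_2k, hence
   E (q t) = E p + beta_(2k+1) t^(2k+1) + O(t^(2k+2)); since q is analytic on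
   both sides of 0 and p is a local minimum, the odd coefficient vanishes too.
   Thus E (q t) - E p <= C t^(2k+2) <= C' |q t - p|^((2k+2)/j). *)

From HB Require Import structures.
From mathcomp Require Import all_boot all_order all_algebra.
From mathcomp Require Import all_classical all_reals all_analysis.
From mathcomp Require Import ring lra.

Set Implicit Arguments.
Unset Strict Implicit.
Unset Printing Implicit Defensive.
Import Order.TTheory GRing.Theory Num.Theory.
Import numFieldNormedType.Exports.
Local Open Scope ring_scope.

(** * Power series with a bounded majorant *)

Section PseriesBound.
Variable R : realType.
Local Open Scope classical_set_scope.
Implicit Types (b : nat -> R) (f : R -> R) (r t B : R).

Definition abs_pseries_le b r B := forall n, pseries (fun i => `|b i|) r n <= B.

Definition pseries_on r b f := forall t, `|t| <= r -> pseries b t @ \oo --> f t.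

Definition psum b t := limn (pseries b t).

Lemma abs_pseries_le_ge0 b r B : abs_pseries_le b r B -> 0 <= B.
Proof. by move/(_ 0%N); rewrite /pseries /series /= big_geq. Qed.

Lemma series_nneg_is_cvg (u : nat -> R) B :
  (forall n, 0 <= u n) -> (forall n, series u n <= B) -> cvgn (series u).
Proof.
move=> u_ge0 uB; apply: nondecreasing_is_cvgn; first exact: nondecreasing_series.
by exists B => _ [n _ <-].
Qed.

Lemma abs_pseries_le_normed b r B t : abs_pseries_le b r B -> `|t| <= r ->
  forall n, [normed pseries b t] n <= B.
Proof.
move=> bB tr n; apply: le_trans (bB n); rewrite /= /pseries /series /=.
apply: ler_sum => i _.
by rewrite normrM normrX ler_wpM2l // lerXn2r // nnegrE (le_trans _ tr).
Qed.

Lemma abs_pseries_le_is_cvg b r B t : abs_pseries_le b r B -> `|t| <= r ->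
  cvgn [normed pseries b t].
Proof.
move=> bB tr; apply: series_nneg_is_cvg (abs_pseries_le_normed bB tr) => n.
exact: normr_ge0.
Qed.

Lemma norm_psum_le b r B t : abs_pseries_le b r B -> `|t| <= r -> `|psum b t| <= B.
Proof.
move=> bB tr; have cvg_normed := abs_pseries_le_is_cvg bB tr.
apply: le_trans (lim_series_norm cvg_normed) _.
by apply: limr_le => //; apply: nearW; exact: abs_pseries_le_normed.
Qed.

Lemma pseries_on_psum b r B : abs_pseries_le b r B -> pseries_on r b (psum b).
Proof. by move=> bB t tr; exact/normed_cvg/(abs_pseries_le_is_cvg bB tr). Qed.

Lemma pseries_onE r b f t : pseries_on r b f -> `|t| <= r -> f t = psum b t.
Proof. by move=> bf tr; rewrite /psum (cvg_lim _ (bf t tr)). Qed.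

Lemma abs_pseries_le_mono b r r' B : abs_pseries_le b r B -> 0 <= r' <= r ->
  abs_pseries_le b r' B.
Proof.
move=> bB /andP[r'_ge0 r'r] n; apply: le_trans (bB n); apply: ler_sum => i _.
by rewrite ler_wpM2l // lerXn2r // nnegrE (le_trans r'_ge0).
Qed.

Lemma pseries0 b n : pseries b 0 n.+1 = b 0%N.
Proof.
rewrite /pseries /series /= big_nat_recl // expr0 mulr1 big1 ?addr0 // => i _.
by rewrite expr0n mulr0.
Qed.

Lemma psum0 b : psum b 0 = b 0%N.
Proof.
apply: cvg_lim => //; apply: cvg_near_cst; near=> n.
have n_gt0 : (0 < n)%N by near: n; exact: nbhs_infty_ge.
by rewrite -(prednK n_gt0) pseries0.
Unshelve. all: by end_near. Qed.

Lemma psum_tail b r B t n : 0 < r -> abs_pseries_le b r B -> `|t| <= r ->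
  `|psum b t - pseries b t n| <= (`|t| / r) ^+ n * B.
Proof.
move=> r_gt0 bB tr.
have /cvg_norm cvg_tail : (fun m => pseries b t m - pseries b t n) @ \oo -->
    psum b t - pseries b t n.
  by apply: cvgB; [exact: pseries_on_psum bB t tr | exact: cvg_cst].
apply: (ler_cvg_to cvg_tail (cvg_cst _)); near=> m.
have nm : (n <= m)%N by near: m; exact: nbhs_infty_ge.
have q_ge0 : 0 <= `|t| / r by rewrite divr_ge0 // ltW.
have q_le1 : `|t| / r <= 1 by rewrite ler_pdivrMr // mul1r.
rewrite /pseries sub_series_geq //; apply: le_trans (ler_norm_sum _ _ _) _.
apply: le_trans (_ : (`|t| / r) ^+ n * \sum_(n <= i < m) `|b i| * r ^+ i <= _).
  rewrite mulr_sumr; apply: ler_sum_nat => i /andP[ni _].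
  rewrite normrM normrX mulrCA ler_wpM2l //.
  have -> : `|t| ^+ i = (`|t| / r) ^+ i * r ^+ i by rewrite -exprMn divfK ?gt_eqF.
  by apply: ler_wpM2r; [rewrite exprn_ge0 ?ltW | exact: ler_wiXn2l].
rewrite ler_wpM2l ?exprn_ge0 //; apply: le_trans (bB m).
rewrite /pseries /series /= [leRHS](@big_cat_nat _ _ _ n) //= lerDr.
by apply: sumr_ge0 => i _; rewrite mulr_ge0 // exprn_ge0 // ltW.
Unshelve. all: by end_near. Qed.

End PseriesBound.

Section SumOfPseries.
Variable R : realType.
Local Open Scope classical_set_scope.

Lemma cvg_sumr (I : Type) (s : seq I) (u : I -> nat -> R) (l : I -> R) :
  (forall i, u i @ \oo --> l i) -> \sum_(i <- s) u i n @[n --> \oo] --> \sum_(i <- s) l i.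
Proof. by move=> ul; apply: cvg_big; [exact: add_continuous | move=> i _; exact: ul]. Qed.

Variables (r S : R) (b : nat -> nat -> R) (B : nat -> R).
Hypotheses (r_gt0 : 0 < r) (bB : forall n, abs_pseries_le (b n) r (B n))
  (BS : forall n, series B n <= S).

Let coef_le n m : `|b n m| * r ^+ m <= B n.
Proof.
apply: le_trans (bB n m.+1); rewrite /pseries /series /= big_nat_recr //= lerDr.
by apply: sumr_ge0 => i _; rewrite mulr_ge0 // exprn_ge0 // ltW.
Qed.

Let cvg_series_coef m : cvgn (series (b ^~ m)).
Proof.
apply/normed_cvg/(series_nneg_is_cvg (B := S / r ^+ m)) => [n|K].
  exact: normr_ge0.
rewrite ler_pdivlMr ?exprn_gt0 // /series /= mulr_suml; apply: le_trans (BS K).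
by apply: ler_sum => n _; exact: coef_le.
Qed.

Definition sum_coef m := limn (series (b ^~ m)).

Lemma abs_pseries_le_sum_coef : abs_pseries_le sum_coef r S.
Proof.
move=> M; have cvg_partial : \sum_(0 <= m < M) `|series (b ^~ m) K| * r ^+ m
    @[K --> \oo] --> pseries (fun m => `|sum_coef m|) r M.
  apply: cvg_sumr => m; apply: cvgM; last exact: cvg_cst.
  by apply: cvg_norm; exact: cvg_series_coef.
apply: (ler_cvg_to cvg_partial (cvg_cst S)); apply: nearW => K.
apply: le_trans (BS K); rewrite /series /=.
apply: le_trans (_ : \sum_(0 <= m < M) \sum_(0 <= n < K) `|b n m| * r ^+ m <= _).
  apply: ler_sum => m _; rewrite -mulr_suml; apply: ler_wpM2r.
    by rewrite exprn_ge0 // ltW.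
  exact: ler_norm_sum.
by rewrite exchange_big /=; apply: ler_sum => n _; exact: (bB n M).
Qed.

Let B_ge0 n : 0 <= B n := abs_pseries_le_ge0 (bB n).

Let L := limn (series B).

Let cvg_series_B : series B @ \oo --> L.
Proof. exact: series_nneg_is_cvg B_ge0 BS. Qed.

Lemma norm_psum_sum_coef_sub t K : `|t| <= r ->
  `|psum sum_coef t - \sum_(0 <= n < K) psum (b n) t| <= L - series B K.
Proof.
move=> tr; have cvg_diff : pseries sum_coef t M - \sum_(0 <= n < K) pseries (b n) t M
    @[M --> \oo] --> psum sum_coef t - \sum_(0 <= n < K) psum (b n) t.
  apply: cvgB; first exact: pseries_on_psum abs_pseries_le_sum_coef t tr.
  by apply: cvg_sumr => n; exact: pseries_on_psum (bB n) t tr.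
apply: (ler_cvg_to (cvg_norm cvg_diff) (cvg_cst _)); apply: nearW => M.
have cvg_partial : \sum_(0 <= n < K') pseries (b n) t M @[K' --> \oo] -->
    pseries sum_coef t M.
  have exch K' : \sum_(0 <= n < K') pseries (b n) t M =
      \sum_(0 <= m < M) series (b ^~ m) K' * t ^+ m.
    by rewrite /pseries /series /= exchange_big; apply: eq_bigr => m _; rewrite mulr_suml.
  under eq_cvg do rewrite exch; apply: cvg_sumr => m.
  by apply: cvgM; [exact: cvg_series_coef | exact: cvg_cst].
apply: (ler_cvg_to (cvg_norm (cvgB cvg_partial (cvg_cst _))) (cvg_cst _)).
near=> K'; have KK' : (K <= K')%N by near: K'; exact: nbhs_infty_ge.
rewrite /= [X in `|X - _|](@big_cat_nat _ _ _ K) //= addrAC subrr add0r.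
apply: le_trans (ler_norm_sum _ _ _) _.
apply: le_trans (_ : \sum_(K <= n < K') B n <= _).
  apply: ler_sum => n _; apply: le_trans (abs_pseries_le_normed (bB n) tr M).
  exact: ler_norm_sum.
rewrite -sub_series_geq // lerB // nondecreasing_cvgn_le //.
by apply: nondecreasing_series => n _ _; exact: B_ge0.
Unshelve. all: by end_near. Qed.

Lemma cvg_series_psum t : `|t| <= r ->
  series (fun n => psum (b n) t) @ \oo --> psum sum_coef t.
Proof.
move=> tr; apply/cvgrPdist_le => e e_gt0.
move/cvgr_dist_le/(_ e e_gt0): cvg_series_B; apply: filterS => K LK.
by apply: le_trans (norm_psum_sum_coef_sub K tr) (le_trans (ler_norm _) LK).
Qed.

End SumOfPseries.

Section BoundedExpansion.
Variable R : realType.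
Local Open Scope classical_set_scope.
Implicit Types (f g : R -> R) (r B : R).

Definition bounded_expansion r f B :=
  exists b, abs_pseries_le b r B /\ pseries_on r b f.

Lemma bounded_expansion_series (f : nat -> R -> R) (B : nat -> R) r S G :
  0 < r -> (forall n, bounded_expansion r (f n) (B n)) ->
  (forall n, series B n <= S) ->
  (forall t, `|t| <= r -> series (f ^~ t) @ \oo --> G t) ->
  bounded_expansion r G S.
Proof.
move=> r_gt0 /choice[b bB] BS fG; have bB' n := (bB n).1.
exists (sum_coef b); split; first exact: abs_pseries_le_sum_coef.
move=> t tr; have fsum : series (f ^~ t) @ \oo --> psum (sum_coef b) t.
  have -> : f ^~ t = fun n => psum (b n) t.
    by apply/funext => n; exact: pseries_onE (bB n).2 tr.
  exact: cvg_series_psum r_gt0 bB' BS t tr.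
rewrite -(cvg_lim _ (fG t tr)) // (cvg_lim _ fsum) //.
exact: pseries_on_psum (abs_pseries_le_sum_coef r_gt0 bB' BS) t tr.
Qed.

Definition shiftX (a : R) n (c : nat -> R) m :=
  if (n <= m)%N then a * c (m - n)%N else 0.

Lemma pseries_shiftX a n c t M :
  pseries (shiftX a n c) t M = a * t ^+ n * pseries c t (M - n)%N.
Proof.
rewrite /pseries /series /= mulr_sumr; have [nM|Mn] := leqP n M.
  rewrite (@big_cat_nat _ _ _ n) //= big_nat_cond big1 ?add0r.
    rewrite -{1}(add0n n) big_addn; apply: eq_bigr => i _.
    by rewrite /shiftX leq_addl addnK exprD; ring.
  by move=> m /andP[/andP[_ mn] _]; rewrite /shiftX leqNgt mn mul0r.
rewrite (_ : M - n = 0)%N; last by apply/eqP; rewrite subn_eq0 ltnW.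
rewrite [RHS]big_geq // big_nat_cond big1 // => m /andP[/andP[_ mM] _].
by rewrite /shiftX leqNgt (ltn_trans mM Mn) mul0r.
Qed.

Lemma bounded_expansion_mulX r g B a n : 0 <= r -> bounded_expansion r g B ->
  bounded_expansion r (fun t => a * t ^+ n * g t) (`|a| * r ^+ n * B).
Proof.
move=> r_ge0 [c [cB cg]]; exists (shiftX a n c); split.
  move=> M; have -> : (fun m => `|shiftX a n c m|) = shiftX `|a| n (fun i => `|c i|).
    by apply/funext => m; rewrite /shiftX; case: ifP; rewrite ?normr0 ?normrM.
  rewrite pseries_shiftX; apply: ler_wpM2l; last exact: cB.
  by rewrite mulr_ge0 ?exprn_ge0.
move=> t tr; rewrite (funext (pseries_shiftX a n c t)).
by apply: cvgM; [exact: cvg_cst | rewrite (cvg_centern n); exact: cg].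
Qed.

Lemma bounded_expansion_cst r c : bounded_expansion r (fun=> c) `|c|.
Proof.
have deltaE (c' t : R) M : pseries (fun i => c' * (i == 0)%:R) t M.+1 = c'.
  rewrite /pseries /series /= big_nat_recl // expr0 !mulr1 big1 ?addr0 // => i _.
  by rewrite mulr0 mul0r.
exists (fun i => c * (i == 0)%:R); split => [[|M]|t _].
- by rewrite /pseries /series /= big_geq.
- rewrite (_ : (fun i => _) = fun i => `|c| * (i == 0)%:R) ?deltaE //.
  by apply/funext => i; rewrite normrM normr_nat.
- apply: cvg_near_cst; near=> M; have M_gt0 : (0 < M)%N by near: M; exact: nbhs_infty_ge.
  by rewrite -(prednK M_gt0) deltaE.
Unshelve. all: by end_near. Qed.

Lemma bounded_expansion_ge0 r f B : bounded_expansion r f B -> 0 <= B.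
Proof. by case=> b [bB _]; exact: abs_pseries_le_ge0 bB. Qed.

Lemma bounded_expansion_add r f g Bf Bg : 0 <= r ->
  bounded_expansion r f Bf -> bounded_expansion r g Bg ->
  bounded_expansion r (fun t => f t + g t) (Bf + Bg).
Proof.
move=> r_ge0 [a [aB af]] [c [cB cg]]; exists (fun n => a n + c n); split.
  move=> M; apply: le_trans (lerD (aB M) (cB M)).
  rewrite /pseries /series /= -big_split /=; apply: ler_sum => n _.
  by rewrite -mulrDl; apply: ler_wpM2r; [exact: exprn_ge0 | exact: ler_normD].
move=> t tr; have -> : pseries (fun n => a n + c n) t = pseries a t + pseries c t.
  apply/funext => M; rewrite fctE /pseries /series /= -big_split /=.
  by apply: eq_bigr => n _; rewrite mulrDl.
exact: cvgD (af t tr) (cg t tr).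
Qed.

Lemma bounded_expansion_mul r f g Bf Bg : 0 < r ->
  bounded_expansion r f Bf -> bounded_expansion r g Bg ->
  bounded_expansion r (fun t => f t * g t) (Bf * Bg).
Proof.
(* f t * g t is the series of the shifted expansions a_n t^n g t. *)
move=> r_gt0 [a [aB af]] gB.
apply: (bounded_expansion_series (f := fun n t => a n * t ^+ n * g t)
  (B := fun n => `|a n| * r ^+ n * Bg)) => //.
- by move=> n; apply: bounded_expansion_mulX => //; exact: ltW.
- move=> K; rewrite /series /= -mulr_suml.
  by apply: ler_wpM2r; [exact: bounded_expansion_ge0 gB | exact: aB].
- move=> t tr; have -> : series (fun n => a n * t ^+ n * g t) = pseries a t * cst (g t).
    by apply/funext => K; rewrite fctE /pseries /series /= mulr_suml.
  by apply: cvgM; [exact: af | exact: cvg_cst].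
Qed.

Lemma bounded_expansion_pow r f B k : 0 < r ->
  bounded_expansion r f B -> bounded_expansion r (fun t => f t ^+ k) (B ^+ k).
Proof.
move=> r_gt0 fB; elim: k => [|k IHk].
  under eq_fun do rewrite expr0.
  by rewrite expr0 -[X in _ _ X]normr1; exact: bounded_expansion_cst.
by under eq_fun do rewrite exprSr; rewrite exprSr; exact: bounded_expansion_mul.
Qed.

Lemma bounded_expansion_sum (I : Type) r (s : seq I) (P : pred I)
    (f : I -> R -> R) (B : I -> R) : 0 <= r ->
  (forall i, P i -> bounded_expansion r (f i) (B i)) ->
  bounded_expansion r (fun t => \sum_(i <- s | P i) f i t) (\sum_(i <- s | P i) B i).
Proof.
move=> r_ge0 fB; elim: s => [|i s IHs].
  under eq_fun do rewrite big_nil.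
  by rewrite big_nil -[X in _ _ X](@normr0 _ R); exact: bounded_expansion_cst.
rewrite big_cons; under eq_fun do rewrite big_cons; case: ifP => // Pi.
exact: bounded_expansion_add r_ge0 (fB i Pi) IHs.
Qed.

Lemma bounded_expansion_prod (I : Type) r (s : seq I) (P : pred I)
    (f : I -> R -> R) (B : I -> R) : 0 < r ->
  (forall i, P i -> bounded_expansion r (f i) (B i)) ->
  bounded_expansion r (fun t => \prod_(i <- s | P i) f i t) (\prod_(i <- s | P i) B i).
Proof.
move=> r_gt0 fB; elim: s => [|i s IHs].
  under eq_fun do rewrite big_nil.
  by rewrite big_nil -[X in _ _ X]normr1; exact: bounded_expansion_cst.
rewrite big_cons; under eq_fun do rewrite big_cons; case: ifP => // Pi.
exact: bounded_expansion_mul r_gt0 (fB i Pi) IHs.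
Qed.

End BoundedExpansion.

(** * Derivatives of power series *)

Section PseriesDerivative.
Variable R : realType.
Local Open Scope classical_set_scope.
Implicit Types (b : nat -> R) (r t K B : R).

Definition radius_ge b r := forall K, 0 <= K < r -> exists B, abs_pseries_le b K B.

Lemma abs_pseries_le_radius_ge b r B : abs_pseries_le b r B -> radius_ge b r.
Proof.
move=> bB K /andP[K_ge0 Kr]; exists B.
by apply: abs_pseries_le_mono bB _; rewrite K_ge0 ltW.
Qed.

Lemma natr_mul_expr_le (x : R) i : 0 <= x < 1 -> i.+1%:R * x ^+ i <= (1 - x)^-1.
Proof.
move=> /andP[x_ge0 x_lt1]; have sub_gt0 : 0 < 1 - x by rewrite subr_gt0.
apply: (@le_trans _ _ (\sum_(j < i.+1) x ^+ j)).
  rewrite -[i.+1 in X in X * _]card_ord -sum1_card natr_sum mulr_suml.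
  apply: ler_sum => j _; rewrite mul1r.
  by apply: ler_wiXn2l; [exact: x_ge0 | exact: ltW | exact: leq_ord].
rewrite -[(1 - x)^-1]mulr1 ler_pdivlMl // -opprB mulNr -subrX1 opprB lerBlDr lerDl.
exact: exprn_ge0.
Qed.

Lemma abs_pseries_le_diffs b K K' B : abs_pseries_le b K' B -> 0 <= K < K' ->
  abs_pseries_le (pseries_diffs b) K ((1 - K / K')^-1 / K' * B).
Proof.
move=> bB /andP[K_ge0 KK']; have K'_gt0 : 0 < K' by exact: le_lt_trans KK'.
have x01 : 0 <= K / K' < 1.
  by apply/andP; split; [rewrite divr_ge0 // ltW | rewrite ltr_pdivrMr // mul1r].
have sub_gt0 : 0 < 1 - K / K' by rewrite subr_gt0; case/andP: x01.
move=> M; rewrite /pseries /series /= /pseries_diffs.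
apply: (@le_trans _ _ (\sum_(0 <= i < M) (1 - K / K')^-1 / K' * (`|b i.+1| * K' ^+ i.+1))).
  apply: ler_sum => i _.
  have -> : K ^+ i = (K / K') ^+ i * K' ^+ i by rewrite -exprMn divfK ?gt_eqF.
  rewrite normrM ger0_norm // exprS.
  rewrite (_ : _ * _ * _ = i.+1%:R * (K / K') ^+ i * (`|b i.+1| * K' ^+ i)); last by ring.
  rewrite (_ : _ / K' * _ = (1 - K / K')^-1 * (`|b i.+1| * K' ^+ i)); last first.
    by field; rewrite gt_eqF // subr_eq0 gt_eqF.
  apply: ler_wpM2r; first by rewrite mulr_ge0 // exprn_ge0 // ltW.
  exact: natr_mul_expr_le.
rewrite -mulr_sumr; apply: ler_wpM2l; first by rewrite mulr_ge0 // invr_ge0 ltW.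
apply: le_trans (bB M.+1); rewrite /pseries /series /= big_nat_recl //= lerDr.
by rewrite mulr_ge0 // exprn_ge0 // ltW.
Qed.

Lemma radius_ge_diffs b r : radius_ge b r -> radius_ge (pseries_diffs b) r.
Proof.
move=> br K /andP[K_ge0 Kr].
have [|B bB] := br ((K + r) / 2); first by apply/andP; split; lra.
by eexists; apply: abs_pseries_le_diffs bB _; apply/andP; split; lra.
Qed.

Lemma radius_ge_iter_diffs b r i : radius_ge b r ->
  radius_ge (iter i (@pseries_diffs R) b) r.
Proof. by move=> br; elim: i => //= i; exact: radius_ge_diffs. Qed.

Lemma is_derive_psum b r t : radius_ge b r -> `|t| < r ->
  is_derive t 1 (psum b) (psum (pseries_diffs b) t).
Proof.
move=> br tr; have t_ge0 := normr_ge0 t; set K := (`|t| + r) / 2.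
have Kr : 0 <= K < r by apply/andP; split; rewrite /K; lra.
have normK : `|K| <= K by rewrite ger0_norm //; case/andP: Kr.
have cvgK c : radius_ge c r -> cvgn (pseries c K).
  by move=> cr; have [B cB] := cr K Kr; exact/normed_cvg/(abs_pseries_le_is_cvg cB).
apply: (pseries_snd_diffs (cvgK _ br) (cvgK _ (radius_ge_diffs br))).
  exact: cvgK _ (radius_ge_diffs (radius_ge_diffs br)).
by rewrite [X in _ < X]ger0_norm; rewrite /K; lra.
Qed.

Lemma iter_pseries_diffs0 b i : iter i (@pseries_diffs R) b 0%N = i`!%:R * b i.
Proof.
elim: i b => [|i IHi] b; first by rewrite mul1r.
by rewrite iterSr IHi /pseries_diffs factS natrM mulrA [i`!%:R * _]mulrC.
Qed.

Lemma near_abs_lt t r : `|t| < r -> \forall s \near t, `|s| < r.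
Proof.
move=> tr; apply/nbhs_ballP; exists (r - `|t|) => /=; first by rewrite subr_gt0.
move=> s; rewrite -ball_normE /ball_ /= => ts.
have := ler_normD (s - t) t; rewrite subrK distrC; lra.
Qed.

Lemma derive1n_eq_chain (V : normedModType R) (f : R -> V) (g : nat -> R -> V) r :
  (forall t, `|t| < r -> f t = g 0%N t) ->
  (forall i t, `|t| < r -> is_derive t 1 (g i) (g i.+1 t)) ->
  forall i t, `|t| < r -> derive1n i f t = g i t.
Proof.
move=> fg gD; elim => [|i IHi] t tr; first exact: fg.
rewrite derive1nS derive1E (@near_eq_derive _ _ _ _ (g i)).
  by have [_ ->] := gD i t tr.
by near=> s; apply: IHi; near: s; exact: near_abs_lt.
Unshelve. all: by end_near. Qed.

Lemma is_derive_row N (g : 'I_N -> R -> R) (dg : 'I_N -> R) t :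
  (forall m, is_derive t 1 (g m) (dg m)) ->
  is_derive t 1 (fun s => \row_m g m s) (\row_m dg m).
Proof.
move=> gD; have rowE m : (fun s => (\row_m0 g m0 s) ord0 m) = g m.
  by apply/funext => s; rewrite mxE.
have der : derivable (fun s => \row_m g m s) t 1.
  by apply/derivable_mxP => i m; rewrite (ord1 i) rowE; case: (gD m).
apply: DeriveDef => //; rewrite derive_mx //; apply/matrixP => i m.
by rewrite !mxE (ord1 i) rowE; have [_ ->] := gD m.
Qed.

Lemma derive1n_psum0 (f : R -> R) b r : 0 < r -> radius_ge b r ->
  (forall t, `|t| < r -> f t = psum b t) -> forall i, derive1n i f 0 = i`!%:R * b i.
Proof.
move=> r_gt0 br fb i; pose g j := psum (iter j (@pseries_diffs R) b).
have gD j t : `|t| < r -> is_derive t 1 (g j) (g j.+1 t).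
  by move=> tr; rewrite /g iterS; exact: is_derive_psum (radius_ge_iter_diffs j br) tr.
by rewrite (derive1n_eq_chain fb gD) ?normr0 // /g psum0 iter_pseries_diffs0.
Qed.

Lemma derive1n_row_psum0 N (Q : R -> 'rV[R]_N) (F : 'I_N -> nat -> R) r :
  0 < r -> (forall m, radius_ge (F m) r) ->
  (forall t, `|t| < r -> Q t = \row_m psum (F m) t) ->
  forall i, derive1n i Q 0 = i`!%:R *: \row_m F m i.
Proof.
move=> r_gt0 Fr QF i; pose g j s := \row_m psum (iter j (@pseries_diffs R) (F m)) s.
have gD j t : `|t| < r -> is_derive t 1 (g j) (g j.+1 t).
  move=> tr; apply: is_derive_row => m; rewrite iterS.
  exact: is_derive_psum (radius_ge_iter_diffs j (Fr m)) tr.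
rewrite (derive1n_eq_chain QF gD) ?normr0 //.
by apply/matrixP => k m; rewrite !mxE psum0 iter_pseries_diffs0.
Qed.

End PseriesDerivative.

Section DerivativeCoefficients.
Variables (R : realType) (V : normedModType R) (f : R -> V) (v : nat -> V).
Hypothesis derive1n_f0 : forall i, derive1n i f 0 = i`!%:R *: v i.

Lemma vanishing_coef k : vanishing k f -> forall i, (1 <= i <= k)%N -> v i = 0.
Proof.
move=> fk i ik; apply/eqP; have := fk i ik; rewrite derive1n_f0 => /eqP.
by rewrite scaler_eq0 pnatr_eq0 eqn0Ngt fact_gt0.
Qed.

Lemma active_coef j : (0 < j)%N -> active j f ->
  (forall i, (1 <= i < j)%N -> v i = 0) /\ v j != 0.
Proof.
move=> j_gt0 [fj1 fj]; have low i : (1 <= i < j)%N -> v i = 0.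
  by case/andP=> i_ge1 ij; apply: (vanishing_coef fj1); rewrite i_ge1 -ltnS prednK.
split => //; apply/eqP => vj; apply: fj => i /andP[i_ge1].
rewrite leq_eqVlt => /orP[/eqP ->|ij]; rewrite derive1n_f0 ?vj ?low ?i_ge1 ?scaler0 //.
Qed.

End DerivativeCoefficients.

(** * Substitution into a multivariate power series *)

Section EuclideanNorm.
Variables (R : realType) (N : nat).
Implicit Types x : 'rV[R]_N.

Lemma sum_sqr_le (I : finType) (a : I -> R) : (forall i, 0 <= a i) ->
  \sum_i a i ^+ 2 <= (\sum_i a i) ^+ 2.
Proof.
move=> a_ge0; rewrite [leRHS]expr2 mulr_suml; apply: ler_sum => i _.
rewrite expr2 mulr_sumr (bigD1 i) //= lerDl.
by apply: sumr_ge0 => j _; exact: mulr_ge0.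
Qed.

Lemma enorm_le_sum x : enorm x <= \sum_i `|x ord0 i|.
Proof.
rewrite /enorm -(ger0_norm (sumr_ge0 _ (fun i _ => normr_ge0 (x ord0 i)))) -sqrtr_sqr.
rewrite ler_sqrt ?sqr_ge0 //; under eq_bigr do rewrite -real_normK ?num_real //.
exact: sum_sqr_le.
Qed.

Lemma norm_coord_le_enorm x i : `|x ord0 i| <= enorm x.
Proof.
rewrite /enorm -sqrtr_sqr ler_sqrt; last by apply: sumr_ge0 => k _; exact: sqr_ge0.
by rewrite (bigD1 i) //= lerDl; apply: sumr_ge0 => k _; exact: sqr_ge0.
Qed.

Lemma enorm_lt_coord x s d :
  (forall m, `|x ord0 m| <= s) -> N%:R * s < d -> enorm x < d.
Proof.
move=> xs Nsd; apply: le_lt_trans (enorm_le_sum x) (le_lt_trans _ Nsd).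
by rewrite mulr_natl -[N in _ *+ N]card_ord -sumr_const; apply: ler_sum => m _.
Qed.

End EuclideanNorm.

Section AnalyticCoordinates.
Variable R : realType.
Local Open Scope classical_set_scope.

Lemma analytic1_at0_psum (f : R -> R) : analytic1_at f 0 ->
  exists r a, 0 < r /\ radius_ge a r /\ forall t, `|t| < r -> f t = psum a t.
Proof.
move=> [r [a [r_gt0 fa]]]; exists r, a; split => //; split.
  move=> K /andP[K_ge0 Kr]; have normK : `|K| < r by rewrite ger0_norm.
  have [[l al] _] := fa K normK.
  rewrite ger0_norm // in al; exists l => n; rewrite -(cvg_lim _ al) //.
  apply: nondecreasing_cvgn_le; last exact: cvgP al.
  by apply: nondecreasing_series => i _ _; rewrite mulr_ge0 ?exprn_ge0.
by move=> t tr; have [_] := fa t tr; rewrite add0r /psum => /cvg_lim ->.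
Qed.

Lemma exists_pos_lower_bound (I : finType) (g : I -> R) : (forall i, 0 < g i) ->
  exists2 r, 0 < r & forall i, r <= g i.
Proof.
move=> g_gt0; have ginv_ge0 i : 0 <= (g i)^-1 by rewrite invr_ge0 ltW.
have S_ge0 : 0 <= \sum_i (g i)^-1 by exact: sumr_ge0.
exists (1 + \sum_i (g i)^-1)^-1 => [|i]; first by rewrite invr_gt0; lra.
rewrite -[g i]invrK lef_pV2 ?posrE ?invr_gt0 //; last lra.
have : 0 <= \sum_(k | k != i) (g k)^-1 by exact: sumr_ge0.
rewrite (bigD1 i) //= in S_ge0 *; lra.
Qed.

Lemma analytic1_at0_row_psum N (q : R -> 'rV[R]_N) :
  (forall m, analytic1_at (fun s => q s ord0 m) 0) ->
  exists r (a : 'I_N -> nat -> R), [/\ 0 < r, forall m, radius_ge (a m) r &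
    forall t, `|t| < r -> q t = \row_m psum (a m) t].
Proof.
move=> qa; have /choice[ra rap] m : exists ra : R * (nat -> R), 0 < ra.1 /\
    radius_ge ra.2 ra.1 /\ forall t, `|t| < ra.1 -> q t ord0 m = psum ra.2 t.
  by have [r [a ?]] := analytic1_at0_psum (qa m); exists (r, a).
have [r r_gt0 r_le] := exists_pos_lower_bound (fun m => (rap m).1).
exists r, (fun m => (ra m).2); split => // [m K /andP[K_ge0 Kr]|t tr].
  by apply: (rap m).2.1; rewrite K_ge0 (lt_le_trans Kr).
apply/matrixP => i m; rewrite (ord1 i) mxE.
by apply: (rap m).2.2; apply: lt_le_trans tr _.
Qed.

End AnalyticCoordinates.

Section Composition.
Variables (R : realType) (N : nat) (E : 'rV[R]_N -> R) (p : 'rV[R]_N).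
Local Open Scope classical_set_scope.
Variables (c : ('I_N -> nat) -> R) (rE : R).
Hypothesis Ec : forall x : 'rV[R]_N, enorm x < rE ->
  (exists l : R, series (abs_hom_part c x) @ \oo --> l) /\
  series (hom_part c x) @ \oo --> E (p + x).

Variables (r s : R) (h : R -> 'rV[R]_N).
Hypotheses (r_gt0 : 0 < r) (s_ge0 : 0 <= s)
  (hs : forall m, bounded_expansion r (fun t => h t ord0 m) s).

Let sv : 'rV[R]_N := const_mx s.

Lemma bounded_expansion_monom (alpha : 'I_N -> nat) :
  bounded_expansion r (fun t => monom alpha (h t)) (monom alpha sv).
Proof.
rewrite /monom; under [X in bounded_expansion _ _ X]eq_bigr do rewrite mxE.
by apply: bounded_expansion_prod => // m _; exact: bounded_expansion_pow.
Qed.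

Lemma bounded_expansion_hom_part n :
  bounded_expansion r (fun t => hom_part c (h t) n) (abs_hom_part c sv n).
Proof.
apply: bounded_expansion_sum => [|alpha _]; first exact: ltW.
rewrite [`|monom _ _|]ger0_norm; last by apply: prodr_ge0 => m _; rewrite mxE exprn_ge0.
exact: bounded_expansion_mul r_gt0 (bounded_expansion_cst _ _) (bounded_expansion_monom _).
Qed.

Lemma bounded_expansion_comp : N%:R * s < rE ->
  exists S, bounded_expansion r (fun t => E (p + h t)) S.
Proof.
move=> NsE; have sv_lt : enorm sv < rE.
  by apply: enorm_lt_coord NsE => m; rewrite mxE ger0_norm.
have [[l cl] _] := Ec sv_lt.
have abs_hom_part_ge0 n : 0 <= abs_hom_part c sv n.
  by apply: sumr_ge0 => alpha _; rewrite mulr_ge0.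
exists l; apply: (bounded_expansion_series r_gt0 bounded_expansion_hom_part).
  move=> n; rewrite -(cvg_lim _ cl) //; apply: nondecreasing_cvgn_le; last exact: cvgP cl.
  by apply: nondecreasing_series => k _ _.
move=> t tr; apply: (Ec _).2; apply: enorm_lt_coord NsE => m.
by have [b [bB bh]] := hs m; rewrite (pseries_onE bh tr); exact: norm_psum_le bB tr.
Qed.

End Composition.

(** * Growth along an analytic curve *)

Section LeadingTerms.
Variable R : realType.
Local Open Scope classical_set_scope.
Implicit Types (b : nat -> R) (r t B : R).

Definition drop_const b n := if n == 0%N then 0 else b n.

Lemma abs_pseries_le_drop_const b r B :
  abs_pseries_le b r B -> abs_pseries_le (drop_const b) r B.
Proof.
move=> bB [|n]; first by have := bB 0%N; rewrite /pseries /series /= !big_geq.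
apply: le_trans (bB n.+1); rewrite /pseries /series /= !big_nat_recl // lerD2r.
by rewrite /drop_const /= normr0 mul0r expr0 mulr1.
Qed.

Lemma pseries_on_drop_const r b f :
  pseries_on r b f -> pseries_on r (drop_const b) (fun t => f t - b 0%N).
Proof.
move=> bf t tr; rewrite -cvg_shiftS.
have -> : (fun n => pseries (drop_const b) t n.+1) = fun n => pseries b t n.+1 - b 0%N.
  apply/funext => n; rewrite /pseries /series /= !big_nat_recl // addrAC.
  by rewrite /drop_const /= mul0r expr0 mulr1 subrr !add0r.
by apply: cvgB; [rewrite cvg_shiftS; exact: bf | exact: cvg_cst].
Qed.

Lemma abs_pseries_le_shrink b K B rho : 0 < K -> 0 <= rho <= K -> b 0%N = 0 ->
  abs_pseries_le b K B -> abs_pseries_le b rho (rho / K * B).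
Proof.
move=> K_gt0 /andP[rho_ge0 rhoK] b0 bB M.
have q_ge0 : 0 <= rho / K by rewrite divr_ge0 // ltW.
have q_le1 : rho / K <= 1 by rewrite ler_pdivrMr // mul1r.
apply: le_trans (_ : \sum_(0 <= n < M) rho / K * (`|b n| * K ^+ n) <= _); last first.
  by rewrite -mulr_sumr; apply: ler_wpM2l => //; exact: bB.
rewrite /pseries /series /=; apply: ler_sum => -[|n] _.
  by rewrite b0 normr0 !mul0r mulr0.
rewrite mulrCA ler_wpM2l //.
have -> : rho ^+ n.+1 = (rho / K) ^+ n.+1 * K ^+ n.+1 by rewrite -exprMn divfK ?gt_eqF.
apply: ler_wpM2r; first by rewrite exprn_ge0 // ltW.
by rewrite exprS ler_piMr ?exprn_ge0 ?exprn_ile1.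
Qed.

Lemma pseries_sparse b t n : (0 < n)%N -> (forall i, (0 < i < n)%N -> b i = 0) ->
  pseries b t n.+1 = b 0%N + b n * t ^+ n.
Proof.
move=> n_gt0 b_gap; rewrite /pseries /series /= big_nat_recr //= big_ltn //.
rewrite expr0 mulr1 big_nat_cond big1 ?addr0 // => i /andP[i_range _].
by rewrite b_gap ?mul0r.
Qed.

Lemma eq0_of_norm_le_small (x tau C : R) : 0 < tau ->
  (forall t, 0 < t <= tau -> `|x| <= t * C) -> x = 0.
Proof.
move=> tau_gt0 xC; apply/eqP; apply: contraT => x_neq0; have x_gt0 : 0 < `|x| by rewrite normr_gt0.
have C_ge0 : 0 <= C.
  have := xC tau; rewrite tau_gt0 lexx => /(_ isT) xtC.
  by rewrite -(pmulr_rge0 _ tau_gt0) (le_trans (normr_ge0 x) xtC).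
pose t := Num.min tau (`|x| / (2 * (C + 1))).
have t_gt0 : 0 < t by rewrite lt_min tau_gt0 divr_gt0 //; lra.
have t_le : t <= `|x| / (2 * (C + 1)) by rewrite ge_min lexx orbT.
have := xC t; rewrite t_gt0 ge_min lexx => /(_ isT).
have : t * C <= `|x| / (2 * (C + 1)) * C by exact: ler_wpM2r.
have : `|x| / (2 * (C + 1)) * C < `|x|.
  by rewrite mulrAC ltr_pdivrMr ?ltr_pM2l //; lra.
lra.
Qed.

Lemma odd_coef_eq0_at_min (g : R -> R) c a C tau n : odd n -> 0 < tau ->
  (forall t, `|t| <= tau -> `|g t - (c + a * t ^+ n)| <= C * `|t| ^+ n.+1) ->
  (forall t, `|t| <= tau -> c <= g t) -> a = 0.
Proof.
move=> n_odd tau_gt0 g_exp g_min; apply: (@eq0_of_norm_le_small _ tau C) => // t.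
case/andP=> t_gt0 t_le; have tn_gt0 : 0 < t ^+ n by exact: exprn_gt0.
have normt : `|t| <= tau by rewrite gtr0_norm.
have normNt : `|- t| <= tau by rewrite normrN gtr0_norm.
have oddN : (- t) ^+ n = - t ^+ n by rewrite exprNn -signr_odd n_odd expr1 mulN1r.
move: (g_exp _ normt) (g_exp _ normNt) (g_min _ normt) (g_min _ normNt).
rewrite normrN [`|t|]gtr0_norm // oddN exprS !ler_norml => /andP[_ up] /andP[_ upN] lo loN.
have le_up : a * t ^+ n <= t * C * t ^+ n by lra.
have le_lo : - (t * C) * t ^+ n <= a * t ^+ n by lra.
by rewrite !(ler_pM2r tn_gt0) in le_up le_lo; rewrite le_up le_lo.
Qed.

Lemma psum_leading_lower b r B j : 0 < r -> abs_pseries_le b r B ->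
  (forall i, (i < j)%N -> b i = 0) -> b j != 0 ->
  exists2 tau : R, 0 < tau & forall t, 0 <= t <= tau -> `|b j| / 2 * t ^+ j <= `|psum b t|.
Proof.
move=> r_gt0 bB b_low bj_neq0; have B_ge0 := abs_pseries_le_ge0 bB.
have bj_gt0 : 0 < `|b j| by rewrite normr_gt0.
have rj_gt0 : 0 < r ^+ j.+1 by exact: exprn_gt0.
pose tau := Num.min r (`|b j| * r ^+ j.+1 / (2 * (B + 1))).
exists tau => [|t /andP[t_ge0 t_le]].
  by rewrite lt_min r_gt0 divr_gt0 ?mulr_gt0 //; lra.
have tr : `|t| <= r by rewrite ger0_norm // (le_trans t_le) // ge_min lexx.
have t_small : t * (2 * (B + 1)) <= `|b j| * r ^+ j.+1.
  by rewrite -ler_pdivlMr; [rewrite (le_trans t_le) // ge_min lexx orbT | lra].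
have head : pseries b t j.+1 = b j * t ^+ j.
  rewrite /pseries /series /= big_nat_recr //= big_nat_cond big1 ?add0r // => i.
  by case/andP=> /andP[_ ij] _; rewrite b_low ?mul0r.
have tail := psum_tail j.+1 r_gt0 bB tr.
have tailE : (`|t| / r) ^+ j.+1 * B = t ^+ j * (t * B / r ^+ j.+1).
  by rewrite ger0_norm // expr_div_n exprSr; field; rewrite gt_eqF.
rewrite head tailE in tail.
have tail_small : t ^+ j * (t * B / r ^+ j.+1) <= t ^+ j * (`|b j| / 2).
  apply: ler_wpM2l; first exact: exprn_ge0.
  by rewrite ler_pdivrMr // mulrAC ler_pdivlMr //; lra.
have := ler_normD (psum b t) (b j * t ^+ j - psum b t).
rewrite addrC subrK distrC normrM (ger0_norm (exprn_ge0 _ t_ge0)); lra.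
Qed.

End LeadingTerms.

Lemma le_powR_of_power_bounds (R : realType) (u v C c t : R) (j n : nat) :
  (0 < j)%N -> 0 <= C -> 0 < c -> 0 <= t -> u <= C * t ^+ n -> c * t ^+ j <= v ->
  u <= (C / powR c (n%:R / j%:R) + 1) * powR v (n%:R / j%:R).
Proof.
move=> j_gt0 C_ge0 c_gt0 t_ge0 uC cv; set e := n%:R / j%:R.
have e_ge0 : 0 <= e by rewrite divr_ge0.
have P_gt0 : 0 < powR c e by exact: powR_gt0.
have tpow : powR (t ^+ j) e = t ^+ n.
  by rewrite -powR_mulrn // -powRrM mulrC divfK ?powR_mulrn // pnatr_eq0 -lt0n.
have ct_le : powR c e * t ^+ n <= powR v e.
  have ct_ge0 : 0 <= c * t ^+ j by rewrite mulr_ge0 ?exprn_ge0 // ltW.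
  rewrite -tpow -powRM ?exprn_ge0 //; last exact: ltW.
  by apply: (ge0_ler_powR e_ge0); rewrite // nnegrE (le_trans ct_ge0).
apply: le_trans uC _.
have -> : C * t ^+ n = C / powR c e * (powR c e * t ^+ n) by rewrite mulrA divfK ?gt_eqF.
rewrite mulrDl mul1r -[leLHS]addr0; apply: lerD; last exact: powR_ge0.
by apply: ler_wpM2l => //; rewrite divr_ge0 // ltW.
Qed.

Section AnalyticCurve.
Variables (R : realType) (N : nat) (q : R -> 'rV[R]_N) (r : R) (a : 'I_N -> nat -> R).
Hypotheses (r_gt0 : 0 < r) (a_rad : forall m, radius_ge (a m) r)
  (qa : forall t, `|t| < r -> q t = \row_m psum (a m) t).
Local Open Scope classical_set_scope.

Lemma centered_coord_pseries (s : R) : 0 < s -> exists2 rho, 0 < rho < r &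
  forall m, abs_pseries_le (drop_const (a m)) rho s /\
    pseries_on rho (drop_const (a m)) (fun t => q t ord0 m - q 0 ord0 m).
Proof.
move=> s_gt0; pose K := r / 2; have K_gt0 : 0 < K by rewrite divr_gt0.
have Kr : 0 <= K < r by rewrite (ltW K_gt0) /= ltr_pdivrMr // ltr_pMr // ltr1n.
have /choice[B aB] : forall m, exists B, abs_pseries_le (a m) K B.
  by move=> m; exact: a_rad.
have B_ge0 m : 0 <= B m := abs_pseries_le_ge0 (aB m).
pose SB := \sum_m B m; have SB_ge0 : 0 <= SB by exact: sumr_ge0.
have B_le m : B m <= SB by rewrite /SB (bigD1 m) //= lerDl sumr_ge0.
pose rho := K * (s / (s + SB)).
have frac_gt0 : 0 < s / (s + SB) by rewrite divr_gt0 //; lra.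
have rho_gt0 : 0 < rho by rewrite mulr_gt0.
have rhoK : rho <= K.
  by apply: ler_piMr; [exact: ltW | rewrite ler_pdivrMr ?mul1r; lra].
exists rho => [|m]; first by rewrite rho_gt0 (le_lt_trans rhoK) //; case/andP: Kr.
have q0 : q 0 ord0 m = a m 0%N by rewrite qa ?normr0 // mxE psum0.
split.
  have rho_range : 0 <= rho <= K by rewrite (ltW rho_gt0) rhoK.
  move=> n; apply: le_trans (abs_pseries_le_shrink K_gt0 rho_range _
      (abs_pseries_le_drop_const (aB m)) n) _ => //.
  rewrite /rho [K * _]mulrC mulfK ?gt_eqF // mulrAC ler_pdivrMr; last lra.
  by rewrite ler_pM2l //; have := B_le m; lra.
rewrite q0; apply: pseries_on_drop_const => t tr.
have tK : `|t| <= K := le_trans tr rhoK.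
rewrite qa ?mxE; first exact: pseries_on_psum (aB m) t tK.
by apply: le_lt_trans tK _; case/andP: Kr.
Qed.

Lemma active_enorm_ge_expr j : (0 < j)%N -> active j q ->
  exists2 c : R, 0 < c & exists2 d : R, 0 < d &
    forall t, 0 <= t <= d -> c * t ^+ j <= enorm (q t - q 0).
Proof.
move=> j_gt0 qj; have [low aj] := active_coef (derive1n_row_psum0 r_gt0 a_rad qa) j_gt0 qj.
have /existsP[m0 am0] : [exists m, a m j != 0].
  apply: contraNT aj => /existsPn a0; apply/eqP/rowP => m; rewrite !mxE.
  exact/eqP/negPn/a0.
have [rho /andP[rho_gt0 _] coords] := centered_coord_pseries ltr01.
have [bB b_on] := coords m0.
have b_low i : (i < j)%N -> drop_const (a m0) i = 0.
  rewrite /drop_const; case: eqP => // /eqP i_neq0 ij.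
  by have := low i; rewrite lt0n i_neq0 ij => /(_ isT)/rowP/(_ m0); rewrite !mxE.
have bj : drop_const (a m0) j = a m0 j by rewrite /drop_const gtn_eqF.
have bj_neq0 : drop_const (a m0) j != 0 by rewrite bj.
have [tau tau_gt0 lower] := psum_leading_lower rho_gt0 bB b_low bj_neq0.
exists (`|a m0 j| / 2); first by rewrite divr_gt0 ?normr_gt0.
exists (Num.min tau rho) => [|t /andP[t_ge0 t_le]]; first by rewrite lt_min tau_gt0.
have t_rho : `|t| <= rho by rewrite ger0_norm // (le_trans t_le) // ge_min lexx orbT.
apply: le_trans (norm_coord_le_enorm _ m0); rewrite !mxE (pseries_onE b_on t_rho) -bj.
by apply: lower; rewrite t_ge0 (le_trans t_le) // ge_min lexx.
Qed.

Variable E : 'rV[R]_N -> R.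

Lemma analytic_comp_pseries d : analytic_at E (q 0) -> 0 < d ->
  exists rho S beta, [/\ 0 < rho, abs_pseries_le beta rho S,
    forall t, `|t| <= rho -> E (q t) = psum beta t &
    forall t, `|t| <= rho -> enorm (q t - q 0) < d].
Proof.
(* s is chosen so that every point with coordinates at most s lies both in the
   convergence domain of the series of E and within distance d of q 0. *)
move=> [rE [c [rE_gt0 Ec]]] d_gt0; pose s := Num.min rE d / N.+1%:R.
have min_gt0 : 0 < Num.min rE d by rewrite lt_min rE_gt0.
have s_gt0 : 0 < s by rewrite divr_gt0.
have Ns_lt : N%:R * s < Num.min rE d.
  by rewrite /s mulrA ltr_pdivrMr // mulrC ltr_pM2l // ltr_nat.
have [rho /andP[rho_gt0 _] coords] := centered_coord_pseries s_gt0.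
have h_exp m : bounded_expansion rho (fun t => (q t - q 0) ord0 m) s.
  by under eq_fun do rewrite !mxE; exists (drop_const (a m)).
have NsE : N%:R * s < rE by apply: lt_le_trans Ns_lt _; rewrite ge_min lexx.
have [S [beta [betaS Eq_beta]]] := bounded_expansion_comp Ec rho_gt0 (ltW s_gt0) h_exp NsE.
exists rho, S, beta; split => // t tr.
  by rewrite -(pseries_onE Eq_beta tr) addrC subrK.
apply: lt_le_trans (enorm_lt_coord _ Ns_lt) _; last by rewrite ge_min lexx orbT.
move=> m; have [bB b_on] := coords m.
by rewrite !mxE (pseries_onE b_on tr); exact: norm_psum_le bB tr.
Qed.

Lemma vanishing_comp_le_expr k : analytic_at E (q 0) -> local_min E (q 0) ->
  vanishing (2 * k) (E \o q) ->
  exists2 C : R, 0 <= C & exists2 d : R, 0 < d &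
    forall t, 0 <= t <= d -> E (q t) - E (q 0) <= C * t ^+ (2 * k).+2.
Proof.
move=> Ean [dm [dm_gt0 Emin]] van.
have [rho [S [beta [rho_gt0 betaS EqE near_q0]]]] := analytic_comp_pseries Ean dm_gt0.
have beta_van : forall i, (1 <= i <= 2 * k)%N -> beta i = 0.
  apply: (vanishing_coef _ van).
  apply: derive1n_psum0 rho_gt0 (abs_pseries_le_radius_ge betaS) _ => t tr.
  exact: EqE (ltW tr).
have beta0 : beta 0%N = E (q 0) by rewrite -psum0 -EqE ?normr0 ?ltW.
pose C := S / rho ^+ (2 * k).+2.
have tail t : `|t| <= rho ->
    `|E (q t) - (E (q 0) + beta (2 * k).+1 * t ^+ (2 * k).+1)| <= C * `|t| ^+ (2 * k).+2.
  have beta_gap i : (0 < i < (2 * k).+1)%N -> beta i = 0.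
    by case/andP=> i_gt0 i_lt; apply: beta_van; rewrite i_gt0 -ltnS.
  move=> tr; rewrite -beta0 -(pseries_sparse t _ beta_gap) // EqE //.
  apply: le_trans (psum_tail _ rho_gt0 betaS tr) _.
  by rewrite /C expr_div_n mulrAC [in leRHS]mulrC mulrA.
have beta_odd : beta (2 * k).+1 = 0.
  apply: (odd_coef_eq0_at_min _ rho_gt0 tail) => [|t tr]; first by rewrite /= oddM.
  exact/Emin/near_q0.
exists C; first by rewrite divr_ge0 ?exprn_ge0 ?(abs_pseries_le_ge0 betaS) ?ltW.
exists rho => // t /andP[t_ge0 t_rho]; have t_norm : `|t| <= rho by rewrite ger0_norm.
have := tail t t_norm; rewrite beta_odd mul0r addr0 [`|t|]ger0_norm //.
by apply: le_trans; exact: ler_norm.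
Qed.

End AnalyticCurve.

Theorem lemma3p10 (R : realType) (N : nat) (E : 'rV[R]_N -> R) (p : 'rV[R]_N)
    (j k : nat) :
  analytic_at E p -> local_min E p -> (1 <= j)%N -> (1 <= k)%N ->
  (exists q : R -> 'rV[R]_N, flex E p j (2 * k) q) ->
  sometimes_slowly E p ((2 * k + 2)%:R / j%:R).
Proof.
move=> Ean Emin j_gt0 _ [q [traj [qj van]]].
have [q0 [eps [eps_gt0 [[d [d_gt0 q_an]] _]]]] := traj.
have zero_in : - d < 0 < eps + d by rewrite oppr_lt0 d_gt0 addr_gt0.
have [r [a [r_gt0 a_rad qa]]] := analytic1_at0_row_psum (q_an 0 zero_in).
rewrite -q0 in Ean Emin *.
have [c c_gt0 [d1 d1_gt0 lower]] := active_enorm_ge_expr r_gt0 a_rad qa j_gt0 qj.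
have [C C_ge0 [d2 d2_gt0 upper]] := vanishing_comp_le_expr r_gt0 a_rad qa Ean Emin van.
exists q; split; first by rewrite q0.
exists (C / powR c ((2 * k + 2)%:R / j%:R) + 1), (Num.min d1 d2).
split; first by rewrite ltr_wpDl // divr_ge0 // powR_ge0.
split; first by rewrite lt_min d1_gt0.
move=> t /andP[t_ge0 t_le].
rewrite addn2; apply: (le_powR_of_power_bounds j_gt0 C_ge0 c_gt0 t_ge0).
  by apply: upper; rewrite t_ge0 (le_trans t_le) // ge_min lexx orbT.
by apply: lower; rewrite t_ge0 (le_trans t_le) // ge_min lexx.
Qed.
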